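(* Let $m\in\mathbb Z$ and let $\mathcal U_m$ be the affine scheme over $\mathbb Z$ defined by $x^2+y^2+z^2-xyz=m$. Suppose $\mathcal U_m(A_{\mathbb Z})\neq\emptyset$, where $\mathcal U_m(A_{\mathbb Z})=\mathcal U_m(\mathbb R)\times\prod_{p \text{ prime}}\mathcal U_m(\mathbb Z_p)$. Then for any finite set $S$ of primes, the image of the natural (diagonal) map $\mathcal U_m(\mathbb Z)\to\prod_{p\notin S}\mathcal U_m(\mathbb Z_p)$ is not dense (for the product of the $p$-adic topologies). *)

From Stdlib Require Import ZArith Znumtheory Reals List.
Open Scope Z_scope.

Definition markoffZ (x y z : Z) : Z := x*x + y*y + z*z - x*y*z.

(* p-adic integers Z_p, as compatible systems of residues:
   zp_seq n is the image in Z/p^n, represented in [0, p^n). *)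
Record Zp (p : Z) : Type := {
  zp_seq : nat -> Z;
  zp_range : forall n : nat, 0 <= zp_seq n < p ^ Z.of_nat n;
  zp_compat : forall n : nat, zp_seq (S n) mod p ^ Z.of_nat n = zp_seq n
}.
Arguments zp_seq {p} _ _.

Record UZp (m p : Z) : Type := {
  uzp_x : Zp p; uzp_y : Zp p; uzp_z : Zp p;
  uzp_eq : forall n : nat,
    (markoffZ (zp_seq uzp_x n) (zp_seq uzp_y n) (zp_seq uzp_z n) - m)
      mod p ^ Z.of_nat n = 0
}.
Arguments uzp_x {m p} _.
Arguments uzp_y {m p} _.
Arguments uzp_z {m p} _.

Definition UR_nonempty (m : Z) : Prop :=
  exists x y z : R, (x*x + y*y + z*z - x*y*z)%R = IZR m.

Definition UZp_all_nonempty (m : Z) : Prop :=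
  forall p : Z, prime p -> inhabited (UZp m p).

(* Density of the image of U_m(Z) in prod_{p prime, p notin S} U_m(Z_p),
   product of p-adic topologies.  A basis of the product topology consists of
   the sets  prod_{p in T} {Q in U_m(Z_p) : Q = P_p mod p^k} x prod_{others} U_m(Z_p)
   for T a finite set of primes outside S, points P_p in U_m(Z_p) and k : nat.
   Density = every nonempty basic open set meets the image. *)
Definition diag_image_dense (m : Z) (S : list Z) : Prop :=
  forall (T : list {p : Z & UZp m p}) (k : nat),
    NoDup (map (@projT1 _ _) T) ->
    (forall q, In q T -> prime (projT1 q) /\ ~ In (projT1 q) S) ->
    exists a b c : Z,
      markoffZ a b c = m /\
      forall q, In q T ->
        let p := projT1 q in
        let P := projT2 q in
        a mod p ^ Z.of_nat k = zp_seq (uzp_x P) k /\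
        b mod p ^ Z.of_nat k = zp_seq (uzp_y P) k /\
        c mod p ^ Z.of_nat k = zp_seq (uzp_z P) k.

From Stdlib Require Import ZArith Znumtheory Reals List.
From Stdlib Require Import Lia Factorial ClassicalEpsilon.
Import ListNotations.
Open Scope Z_scope.

(* The Vieta moves (x, y, z) -> (x, y, xy - z), together with permutations, act on the
   integral points of x^2 + y^2 + z^2 - xyz = m.

   For m <> 4, replacing a largest coordinate |z| > 9 + |m| strictly decreases it, so each
   orbit meets the box of radius 9 + |m|.  "Two coordinates are divisible by p" is
   invariant under the moves, and for p > 9 + |m| a point of the box has this property
   only if two coordinates vanish.  So an integral point with the property at such a p has
   it at every prime q, and no integral point can approximate both a p-adic point
   (0, 0, sqrt m) and a q-adic point (0, y0, sqrt (m - y0^2)) whose y and z are units.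

   For m = 4 the descent works while the two smaller coordinates are at least 3 in absolute
   value, and "2 + t or 2 - t is a square for some coordinate t" propagates up an orbit
   because (2 +- z)(2 +- (xy - z)) = (x +- y)^2.  Hence every integral point has this
   property, while approximating integral points (p + 2, p + 2, (p + 2)^2 - 2) and two sign
   variants at three large primes makes all six numbers 2 +- t non-squares. *)

(** * Vieta descent *)

Lemma markoffZ_rotate x y z : markoffZ y z x = markoffZ x y z.
Proof. unfold markoffZ; ring. Qed.

Lemma markoffZ_swap x y z : markoffZ y x z = markoffZ x y z.
Proof. unfold markoffZ; ring. Qed.

Lemma markoffZ_vieta x y z : markoffZ x y (x*y - z) = markoffZ x y z.
Proof. unfold markoffZ; ring. Qed.

(* c and c' are the roots of T^2 - ab T + a^2 + b^2 - m; the bound is (c - b)(c' - b) >= 0. *)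
Lemma vieta_roots_bound m a b c c' :
  0 <= a <= b -> b <= c <= c' -> 0 < c -> c + c' = a*b -> c*c' = a*a + b*b - m ->
  (a = 2 /\ m = 4) \/ (3 <= a /\ b*b*(a-2) <= a*a - m /\ 2*c <= a*b).
Proof.
  intros Hab Hbc Hc Hsum Hprod.
  assert (Ha : 2 <= a) by nia.
  destruct (Z.eq_dec a 2) as [->|Ha2].
  - left; nia.
  - right. assert (0 <= (c-b)*(c'-b)) by nia. nia.
Qed.

Lemma markoffZ_vieta_nondescent m x y z :
  markoffZ x y z = m -> Z.abs x <= Z.abs y <= Z.abs z -> Z.abs z <= Z.abs (x*y - z) ->
  0 < Z.abs z ->
  Z.abs z * Z.abs z <= m - x*x - y*y \/ (Z.abs x = 2 /\ m = 4) \/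
  (3 <= Z.abs x /\ Z.abs y * Z.abs y * (Z.abs x - 2) <= Z.abs x * Z.abs x - m /\
   2 * Z.abs z <= Z.abs x * Z.abs y).
Proof.
  intros Hm Hxyz Hz' Hz.
  assert (V : z * (x*y - z) = x*x + y*y - m) by (rewrite <- Hm; unfold markoffZ; ring).
  destruct (Z_le_gt_dec (z * (x*y - z)) 0) as [Hneg|Hpos].
  - left. assert (Z.abs z * Z.abs (x*y - z) = m - x*x - y*y)
      by (rewrite <- Z.abs_mul, Z.abs_neq; lia).
    nia.
  - right. apply (vieta_roots_bound m _ _ _ (Z.abs (x*y - z))); lia.
Qed.

Lemma markoffZ_vieta_descends m x y z :
  m <> 4 -> markoffZ x y z = m -> Z.abs x <= Z.abs y <= Z.abs z ->
  9 + Z.abs m < Z.abs z -> Z.abs (x*y - z) < Z.abs z.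
Proof.
  intros Hm4 Hm Hxyz Hbig.
  destruct (Z_lt_le_dec (Z.abs (x*y - z)) (Z.abs z)) as [|Hz']; [assumption|exfalso].
  destruct (markoffZ_vieta_nondescent m x y z) as [Hsmall|[[_ E]|(Ha & Hb & Hc)]];
    auto; try lia.
  - nia.
  - assert (Hb2 : Z.abs y * Z.abs y <= 9 + Z.abs m).
    { assert (Z.abs x * Z.abs x * (Z.abs x - 3) >= Z.abs x * Z.abs x - 9) by nia. nia. }
    nia.
Qed.

Lemma markoff4_vieta_descends x y z :
  markoffZ x y z = 4 -> 3 <= Z.abs x -> Z.abs x <= Z.abs y <= Z.abs z ->
  Z.abs (x*y - z) < Z.abs z.
Proof.
  intros Hm Hx Hxyz.
  destruct (Z_lt_le_dec (Z.abs (x*y - z)) (Z.abs z)) as [|Hz']; [assumption|exfalso].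
  destruct (markoffZ_vieta_nondescent 4 x y z) as [Hsmall|[[E _]|(Ha & Hb & Hc)]];
    auto; nia.
Qed.

Lemma markoffZ_vieta_induction m (P : Z -> Z -> Z -> Prop) :
  (forall x y z, P x y z -> P y z x) ->
  (forall x y z, P x y z -> P y x z) ->
  (forall x y z, markoffZ x y z = m -> Z.abs x <= Z.abs y <= Z.abs z ->
     (Z.abs (x*y - z) < Z.abs z -> P x y (x*y - z)) -> P x y z) ->
  forall x y z, markoffZ x y z = m -> P x y z.
Proof.
  intros Hrot Hswap Hstep.
  enough (H : forall h, 0 <= h -> forall x y z,
             Z.abs x + Z.abs y + Z.abs z = h -> markoffZ x y z = m -> P x y z)
    by (intros x y z; apply (H (Z.abs x + Z.abs y + Z.abs z)); [lia|reflexivity]).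
  intros h Hh; pattern h; apply Z_lt_induction; [clear h Hh|exact Hh].
  intros h IH.
  assert (Hzmax : forall x y z, Z.abs x + Z.abs y + Z.abs z = h -> markoffZ x y z = m ->
            Z.abs x <= Z.abs z -> Z.abs y <= Z.abs z -> P x y z).
  { intros x y z Hh Hm Hxz Hyz.
    destruct (Z.le_ge_cases (Z.abs x) (Z.abs y)).
    - apply Hstep; [assumption|lia|].
      intros Hlt; apply (IH (Z.abs x + Z.abs y + Z.abs (x*y - z))); [lia|reflexivity|].
      now rewrite markoffZ_vieta.
    - apply Hswap, Hstep; [now rewrite markoffZ_swap|lia|].
      intros Hlt; apply (IH (Z.abs y + Z.abs x + Z.abs (y*x - z))); [lia|reflexivity|].
      now rewrite markoffZ_vieta, markoffZ_swap. }
  intros x y z Hh Hm.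
  destruct (Z.le_ge_cases (Z.abs x) (Z.abs z)), (Z.le_ge_cases (Z.abs y) (Z.abs z)),
    (Z.le_ge_cases (Z.abs x) (Z.abs y)).
  all: first
    [ apply Hzmax; lia
    | apply Hrot, Hzmax; [lia|now rewrite markoffZ_rotate, markoffZ_rotate|lia..]
    | apply Hrot, Hrot, Hzmax; [lia|now rewrite markoffZ_rotate|lia..] ].
Qed.

(** * The divisibility invariant for m <> 4 *)

Definition two_coords_divisible (p x y z : Z) : Prop :=
  ((p | x) /\ (p | y)) \/ ((p | x) /\ (p | z)) \/ ((p | y) /\ (p | z)).

Lemma two_coords_divisible_vieta p x y z :
  two_coords_divisible p x y (x*y - z) <-> two_coords_divisible p x y z.
Proof.
  assert (Hsub : forall w, (p | x) \/ (p | y) -> (p | w) -> (p | x*y - w)).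
  { intros w [Hx|Hy] Hw; apply Z.divide_sub_r; auto;
      [apply Z.divide_mul_l | apply Z.divide_mul_r]; assumption. }
  unfold two_coords_divisible. split.
  - intros [[Hx Hy]|[[Hx Hz]|[Hy Hz]]]; [left; auto|right; left|right; right];
      (split; [assumption|]); replace z with (x*y - (x*y - z)) by ring; auto.
  - intros [[Hx Hy]|[[Hx Hz]|[Hy Hz]]]; [left; auto|right; left|right; right]; auto.
Qed.

Lemma divide_small_eq_0 p u : (p | u) -> Z.abs u < Z.abs p -> u = 0.
Proof.
  intros Hd Hu. destruct (Z.eq_dec u 0) as [|Hu0]; [assumption|].
  apply Zdivide_bounds in Hd; lia.
Qed.

Lemma two_coords_divisible_small p q x y z :
  Z.abs x < p -> Z.abs y < p -> Z.abs z < p ->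
  two_coords_divisible p x y z -> two_coords_divisible q x y z.
Proof.
  intros Hx Hy Hz H.
  assert (H0 : forall u, Z.abs u < p -> (p | u) -> (q | u)).
  { intros u Hu Hd. rewrite (divide_small_eq_0 p u Hd ltac:(lia)). apply Z.divide_0_r. }
  unfold two_coords_divisible in *. destruct H as [[]|[[]|[]]]; auto.
Qed.

Lemma markoffZ_two_coords_divisible_transfer m p q x y z :
  m <> 4 -> 9 + Z.abs m < p -> markoffZ x y z = m ->
  two_coords_divisible p x y z -> two_coords_divisible q x y z.
Proof.
  intros Hm4 Hp. revert x y z.
  apply (markoffZ_vieta_induction m
           (fun x y z => two_coords_divisible p x y z -> two_coords_divisible q x y z));
    try (unfold two_coords_divisible; tauto).
  intros x y z Hm Hxyz IH Hdiv.
  destruct (Z_le_gt_dec (Z.abs z) (9 + Z.abs m)).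
  - apply (two_coords_divisible_small p); auto; lia.
  - apply two_coords_divisible_vieta, IH, two_coords_divisible_vieta; auto.
    apply (markoffZ_vieta_descends m); auto; lia.
Qed.

(** * The square invariant for m = 4 *)

Definition square (a : Z) : Prop := exists w, a = w * w.

Lemma divide_of_square_divide w s : w <> 0 -> (w*w | s*s) -> (w | s).
Proof.
  intros Hw H.
  set (g := Z.gcd w s).
  assert (Hg : 0 < g).
  { assert (g <> 0) by (intro E; apply Z.gcd_eq_0_l in E; auto).
    pose proof (Z.gcd_nonneg w s); lia. }
  assert (Ew : w = g * (w / g)) by (apply Zdivide_Zdiv_eq; [lia|apply Z.gcd_divide_l]).
  assert (Es : s = g * (s / g)) by (apply Zdivide_Zdiv_eq; [lia|apply Z.gcd_divide_r]).
  assert (Hrel : Z.gcd (w / g) (s / g) = 1) by (apply Z.gcd_div_gcd; auto; lia).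
  set (w' := w / g) in *; set (s' := s / g) in *.
  assert (Hw's' : (w' | s' * s')).
  { apply (Z.mul_divide_cancel_l _ _ (g*g)); [lia|].
    apply Z.divide_trans with (w*w); [exists w'; rewrite Ew at 1 2; ring|].
    replace (g*g*(s'*s')) with (s*s) by (rewrite Es at 1 2; ring). exact H. }
  assert (Hw's : (w' | s')) by (apply Gauss with s'; [|apply Zgcd_1_rel_prime]; auto).
  assert (Hunit : (w' | 1))
    by (rewrite <- Hrel; apply Z.gcd_greatest; auto using Z.divide_refl).
  rewrite Ew. apply Z.divide_1_r in Hunit as [-> | ->].
  - rewrite Z.mul_1_r. apply Z.gcd_divide_r.
  - rewrite Z.mul_opp_r, Z.mul_1_r. apply Z.divide_opp_l, Z.gcd_divide_r.
Qed.

Lemma square_of_mul_square a w s : w <> 0 -> a * (w*w) = s*s -> square a.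
Proof.
  intros Hw H.
  destruct (divide_of_square_divide w s Hw) as [k ->]; [exists a; lia|].
  exists k. apply (Z.mul_reg_r _ _ (w*w)); [nia|]. rewrite H; ring.
Qed.

Definition some_shift_square (x y z : Z) : Prop :=
  square (2 + x) \/ square (2 - x) \/ square (2 + y) \/ square (2 - y) \/
  square (2 + z) \/ square (2 - z).

Lemma some_shift_square_vieta x y z :
  markoffZ x y z = 4 -> some_shift_square x y (x*y - z) -> some_shift_square x y z.
Proof.
  unfold some_shift_square, markoffZ. intros Hm Hsq.
  assert (Eplus : (2 + z) * (2 + (x*y - z)) = (x + y) * (x + y)) by nia.
  assert (Eminus : (2 - z) * (2 - (x*y - z)) = (x - y) * (x - y)) by nia.
  destruct Hsq as [|[|[|[|[[w Hw]|[w Hw]]]]]]; auto; rewrite Hw in *.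
  - destruct (Z.eq_dec w 0) as [->|Hw0].
    + do 5 right. exists x. nia.
    + do 4 right; left. exact (square_of_mul_square _ w _ Hw0 Eplus).
  - destruct (Z.eq_dec w 0) as [->|Hw0].
    + do 4 right; left. exists x. nia.
    + do 5 right. exact (square_of_mul_square _ w _ Hw0 Eminus).
Qed.

Lemma shift_square_small t : 1 <= Z.abs t <= 2 -> square (2 + t) \/ square (2 - t).
Proof.
  intros Ht. assert (E : t = 1 \/ t = -1 \/ t = 2 \/ t = -2) by lia.
  destruct E as [-> | [-> | [-> | ->]]];
    [right; exists 1 | left; exists 1 | left; exists 2 | right; exists 2]; reflexivity.
Qed.

Lemma markoff4_some_shift_square x y z : markoffZ x y z = 4 -> some_shift_square x y z.
Proof.
  revert x y z.
  apply markoffZ_vieta_induction; try (unfold some_shift_square; tauto).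
  intros x y z Hm Hxyz IH.
  destruct (Z_le_gt_dec 3 (Z.abs x)) as [Hx|Hx].
  - apply some_shift_square_vieta, IH, markoff4_vieta_descends; auto.
  - destruct (Z.eq_dec x 0) as [->|Hx0].
    + unfold markoffZ in Hm.
      assert (Z.abs z = 2) by nia.
      unfold some_shift_square; destruct (shift_square_small z ltac:(lia)); tauto.
    + unfold some_shift_square; destruct (shift_square_small x ltac:(lia)); tauto.
Qed.

Lemma not_square_mod_sq p X u : prime p -> (p*p | X - p*u) -> ~ (p | u) -> ~ square X.
Proof.
  intros Hp HX Hu [w ->].
  assert (Hpp : (p | p*p)) by apply Z.divide_factor_l.
  assert (Hpw : (p | w)).
  { destruct (prime_mult p Hp w w) as [|]; [|assumption..].
    replace (w*w) with ((w*w - p*u) + p*u) by ring.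
    apply Z.divide_add_r; [apply Z.divide_trans with (p*p)|]; auto using Z.divide_factor_l. }
  destruct Hpw as [k ->]. apply Hu, (Z.mul_divide_cancel_l _ _ p).
  - pose proof (prime_ge_2 p Hp); lia.
  - replace (p*u) with (k*p*(k*p) - (k*p*(k*p) - p*u)) by ring.
    apply Z.divide_sub_r; [exists (k*k); ring|assumption].
Qed.

(** * p-adic points *)

Lemma pow_succ_nat p n : p ^ Z.of_nat (S n) = p ^ Z.of_nat n * p.
Proof. rewrite Nat2Z.inj_succ, Z.pow_succ_r; [ring|lia]. Qed.

Lemma pow_nat_pos p n : 0 < p -> 0 < p ^ Z.of_nat n.
Proof. intro Hp. apply Z.pow_pos_nonneg; lia. Qed.

Lemma mod_eq_divide N a b : N <> 0 -> a mod N = b mod N -> (N | a - b).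
Proof.
  intros HN E. apply Z.mod_divide; [assumption|].
  now rewrite Zminus_mod, E, Z.sub_diag.
Qed.

Lemma mod_sub_divide N a : N <> 0 -> (N | a mod N - a).
Proof. intro HN. apply mod_eq_divide; [assumption|]. now rewrite Z.mod_mod. Qed.

Lemma square_congr N a b D : (N | a - b) -> (N | b*b - D) -> (N | a*a - D).
Proof.
  intros Hab Hb. replace (a*a - D) with ((b*b - D) + (a - b)*(a + b)) by ring.
  apply Z.divide_add_r; [assumption|apply Z.divide_mul_l; assumption].
Qed.

Lemma Zp_of_lifts p (Q : nat -> Z -> Prop) : 0 < p ->
  (forall n a b, a mod p ^ Z.of_nat n = b mod p ^ Z.of_nat n -> Q n a -> Q n b) ->
  Q 0%nat 0 ->
  (forall n a, Q n a ->
     exists a', Q (S n) a' /\ a' mod p ^ Z.of_nat n = a mod p ^ Z.of_nat n) ->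
  exists z : Zp p, forall n, Q n (zp_seq z n).
Proof.
  intros Hp Hcong H0 Hstep.
  pose (R n := {a : Z | Q n a /\ 0 <= a < p ^ Z.of_nat n}).
  pose proof (pow_nat_pos p) as Hpow.
  assert (next : forall n (s : R n),
             {s' : R (S n) | proj1_sig s' mod p ^ Z.of_nat n = proj1_sig s}).
  { intros n [a [Ha Hr]]. apply constructive_indefinite_description.
    destruct (Hstep n a Ha) as [a' [Ha' E]].
    set (N := p ^ Z.of_nat (S n)).
    assert (HN : (p ^ Z.of_nat n | N)) by (exists p; unfold N; rewrite pow_succ_nat; ring).
    assert (HQ : Q (S n) (a' mod N))
      by (apply (Hcong _ a'); [rewrite Z.mod_mod; [|specialize (Hpow (S n) Hp); lia]|]; auto).
    exists (exist _ (a' mod N) (conj HQ (Z.mod_pos_bound _ _ (Hpow (S n) Hp)))).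
    cbn. rewrite Z.mod_mod_divide, E by assumption. apply Z.mod_small, Hr. }
  pose (seq := nat_rect R (exist _ 0 (conj H0 (conj (Z.le_refl 0) Z.lt_0_1)))
                 (fun n s => proj1_sig (next n s))).
  exists {| zp_seq n := proj1_sig (seq n);
            zp_range n := proj2 (proj2_sig (seq n));
            zp_compat n := proj2_sig (next n (seq n)) |}.
  intro n. exact (proj1 (proj2_sig (seq n))).
Qed.

Lemma sqrt_mod_pow_lift p D n a : prime p -> p <> 2 -> ~ (p | D) -> (0 < n)%nat ->
  (p ^ Z.of_nat n | a*a - D) ->
  exists a', (p ^ Z.of_nat (S n) | a'*a' - D) /\
             a' mod p ^ Z.of_nat n = a mod p ^ Z.of_nat n.
Proof.
  intros Hp Hp2 HD Hn [e He].
  set (N := p ^ Z.of_nat n) in *.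
  assert (HpN : (p | N)).
  { destruct n as [|k]; [lia|]. exists (p ^ Z.of_nat k). apply pow_succ_nat. }
  assert (H2a : ~ (p | 2 * a)).
  { intros Hpa. destruct (prime_mult p Hp 2 a Hpa) as [Hp2'|Hpa'].
    - apply Z.divide_pos_le in Hp2'; [|lia]. pose proof (prime_ge_2 p Hp); lia.
    - apply HD. replace D with (a*a - e*N) by lia.
      apply Z.divide_sub_r; [apply Z.divide_mul_l|apply Z.divide_mul_r]; auto. }
  destruct (rel_prime_bezout _ _ (prime_rel_prime p Hp _ H2a)) as [u v Huv].
  exists (a - N * (e * v)). split.
  - rewrite pow_succ_nat; fold N. destruct HpN as [c Hc].
    exists (e * u + c * e * e * v * v).
    replace ((a - N * (e * v)) * (a - N * (e * v)) - D)
      with ((a*a - D) - N * e * (v * (2 * a)) + N * N * (e * v) * (e * v)) by ring.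
    rewrite He. replace (v * (2 * a)) with (1 - u * p) by lia.
    rewrite Hc. ring.
  - replace (a - N * (e * v)) with (a + (- (e * v)) * N) by ring.
    apply Z_mod_plus_full.
Qed.

Lemma Zp_sqrt p D r : prime p -> p <> 2 -> ~ (p | D) -> (p | r*r - D) ->
  exists z : Zp p, forall n, (p ^ Z.of_nat n | zp_seq z n * zp_seq z n - D).
Proof.
  intros Hp Hp2 HD Hr.
  assert (Hp0 : 0 < p) by (pose proof (prime_ge_2 p Hp); lia).
  apply (Zp_of_lifts p (fun n a => (p ^ Z.of_nat n | a * a - D))); [assumption| | |].
  - intros n a b E Ha. apply (square_congr _ _ a); [|assumption].
    apply mod_eq_divide; [pose proof (pow_nat_pos p n Hp0); lia|auto].
  - apply Z.divide_1_l.
  - intros [|k] a Ha.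
    + exists r. split; [now rewrite pow_succ_nat, Z.mul_1_l|].
      now rewrite !Z.mod_1_r.
    + apply sqrt_mod_pow_lift; auto; lia.
Qed.

Definition Zp_of_Z (p : Z) (Hp : 0 < p) (c : Z) : Zp p.
Proof.
  refine {| zp_seq n := c mod p ^ Z.of_nat n;
            zp_range n := Z.mod_pos_bound _ _ (pow_nat_pos p n Hp) |}.
  intro n. symmetry. apply Zmod_div_mod; auto using pow_nat_pos.
  exists p. rewrite pow_succ_nat; ring.
Defined.

Lemma markoffZ_congr N a b c a' b' c' :
  (N | a - a') -> (N | b - b') -> (N | c - c') ->
  (N | markoffZ a b c - markoffZ a' b' c').
Proof.
  intros [i Ha] [j Hb] [k Hc].
  exists (i*(a + a') + j*(b + b') + k*(c + c') - (i*b*c + a'*j*c + a'*b'*k)).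
  replace a with (a' + i*N) by lia. replace b with (b' + j*N) by lia.
  replace c with (c' + k*N) by lia. unfold markoffZ. ring.
Qed.

Lemma UZp_of_solution m p a b c : 0 < p -> markoffZ a b c = m ->
  exists P : UZp m p, forall n,
    zp_seq (uzp_x P) n = a mod p ^ Z.of_nat n /\ zp_seq (uzp_y P) n = b mod p ^ Z.of_nat n /\
    zp_seq (uzp_z P) n = c mod p ^ Z.of_nat n.
Proof.
  intros Hp Hm.
  assert (Heq : forall n, (markoffZ (zp_seq (Zp_of_Z p Hp a) n) (zp_seq (Zp_of_Z p Hp b) n)
                             (zp_seq (Zp_of_Z p Hp c) n) - m) mod p ^ Z.of_nat n = 0).
  { intro n. assert (HN : p ^ Z.of_nat n <> 0) by (apply Z.pow_nonzero; lia).
    apply Zdivide_mod. rewrite <- Hm. cbn. apply markoffZ_congr; apply mod_sub_divide, HN. }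
  exists {| uzp_eq := Heq |}. repeat split.
Qed.

Lemma UZp_of_sqrt m p y0 r : prime p -> p <> 2 -> ~ (p | m - y0*y0) ->
  (p | r*r - (m - y0*y0)) ->
  exists P : UZp m p, zp_seq (uzp_x P) 1 = 0 /\ zp_seq (uzp_y P) 1 = y0 mod p /\
    (p | zp_seq (uzp_z P) 1 * zp_seq (uzp_z P) 1 - (m - y0*y0)).
Proof.
  intros Hp Hp2 HD Hr.
  assert (Hp0 : 0 < p) by (pose proof (prime_ge_2 p Hp); lia).
  destruct (Zp_sqrt p _ r Hp Hp2 HD Hr) as [z Hz].
  assert (Heq : forall n, (markoffZ (zp_seq (Zp_of_Z p Hp0 0) n) (zp_seq (Zp_of_Z p Hp0 y0) n)
                             (zp_seq z n) - m) mod p ^ Z.of_nat n = 0).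
  { intro n. assert (HN : p ^ Z.of_nat n <> 0) by (apply Z.pow_nonzero; lia).
    apply Zdivide_mod. cbn.
    set (y := y0 mod p ^ Z.of_nat n); set (w := zp_seq z n).
    replace (markoffZ 0 y w - m) with ((y - y0) * (y + y0) + (w*w - (m - y0*y0)))
      by (unfold markoffZ; ring).
    apply Z.divide_add_r; [apply Z.divide_mul_l, mod_sub_divide, HN|apply Hz]. }
  exists {| uzp_eq := Heq |}. cbn. rewrite Z.mul_1_r.
  split; [reflexivity|split; [reflexivity|]].
  specialize (Hz 1%nat). now rewrite Z.pow_1_r in Hz.
Qed.

Lemma prime_divisor_exists n : 1 < n -> exists p, prime p /\ (p | n).
Proof.
  intros Hn. assert (Hn0 : 0 <= n) by lia. revert Hn.
  pattern n; apply Z_lt_induction; [clear n Hn0|exact Hn0]. intros n IH Hn.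
  destruct (prime_dec n) as [Hp|Hp]; [exists n; auto using Z.divide_refl|].
  destruct (not_prime_divide n Hn Hp) as [d [Hd Hdn]].
  destruct (IH d ltac:(lia) ltac:(lia)) as [p [Hp' Hpd]].
  exists p; split; [assumption|apply Z.divide_trans with d; assumption].
Qed.

Lemma divide_fact i k : (0 < i <= k)%nat -> (Z.of_nat i | Z.of_nat (fact k)).
Proof.
  induction k as [|k IH]; intros Hik; [lia|].
  change (fact (S k)) with (S k * fact k)%nat. rewrite Nat2Z.inj_mul.
  destruct (Nat.eq_dec i (S k)) as [->|Hne].
  - apply Z.divide_factor_l.
  - apply Z.divide_mul_r, IH. lia.
Qed.

(* Any prime factor of D L^2 - 1 with L = (K + 2)! works, with square root D L. *)
Lemma exists_prime_quadratic_residue D K : D <> 0 ->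
  exists p r, prime p /\ K < p /\ ~ (p | D) /\ (p | r*r - D).
Proof.
  intros HD.
  set (L := Z.of_nat (fact (Z.to_nat K + 2))).
  assert (HL : 2 <= L).
  { apply Z.divide_pos_le; [pose proof (lt_O_fact (Z.to_nat K + 2)); lia|].
    apply (divide_fact 2). lia. }
  destruct (prime_divisor_exists (Z.abs (D*L*L - 1))) as [q [Hq Hqw]]; [nia|].
  rewrite Z.divide_abs_r in Hqw.
  assert (Hq1 : ~ (q | 1))
    by (intro H1; apply Z.divide_1_r in H1; pose proof (prime_ge_2 q Hq); lia).
  assert (Hcoprime : forall d, (q | d) -> (d | D * L * L) -> False).
  { intros d Hqd Hd. apply Hq1. replace 1 with (D*L*L - (D*L*L - 1)) by ring.
    apply Z.divide_sub_r; [apply Z.divide_trans with d|]; assumption. }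
  exists q, (D*L). split; [assumption|split; [|split]].
  - destruct (Z_le_gt_dec q K) as [HqK|]; [exfalso|lia].
    pose proof (prime_ge_2 q Hq).
    apply (Hcoprime q (Z.divide_refl q)), Z.divide_mul_l, Z.divide_mul_r.
    rewrite <- (Z2Nat.id q) by lia. apply divide_fact. lia.
  - intros HqD. apply (Hcoprime D HqD). exists (L*L). ring.
  - replace (D*L*(D*L) - D) with (D * (D*L*L - 1)) by ring. apply Z.divide_mul_r, Hqw.
Qed.

Lemma exists_prime_gt K : exists p, prime p /\ K < p.
Proof.
  destruct (exists_prime_quadratic_residue 1 K) as (p & _ & Hp & HKp & _); [lia|].
  exists p; auto.
Qed.

Lemma exists_UZp_two_coords_divisible m K : exists p (P : UZp m p),
  prime p /\ K < p /\
  two_coords_divisible p (zp_seq (uzp_x P) 1) (zp_seq (uzp_y P) 1) (zp_seq (uzp_z P) 1).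
Proof.
  destruct (Z.eq_dec m 0) as [->|Hm].
  - destruct (exists_prime_gt K) as (p & Hp & HKp).
    destruct (UZp_of_solution 0 p 0 0 0) as [P HP];
      [pose proof (prime_ge_2 p Hp); lia|reflexivity|].
    exists p, P. split; [assumption|split; [assumption|]].
    destruct (HP 1%nat) as (-> & -> & _). left. split; apply Z.divide_0_r.
  - destruct (exists_prime_quadratic_residue m (Z.max K 2)) as (p & r & Hp & HKp & HD & Hr);
      [assumption|].
    rewrite <- (Z.sub_0_r m), <- (Z.mul_0_l 0) in HD, Hr.
    destruct (UZp_of_sqrt m p 0 r Hp ltac:(lia) HD Hr) as (P & Hx & Hy & _).
    exists p, P. split; [assumption|split; [lia|]].
    rewrite Hx, Hy. left. split; apply Z.divide_0_r.
Qed.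

Lemma exists_UZp_not_two_coords_divisible m K : exists p (P : UZp m p),
  prime p /\ K < p /\
  ~ two_coords_divisible p (zp_seq (uzp_x P) 1) (zp_seq (uzp_y P) 1) (zp_seq (uzp_z P) 1).
Proof.
  set (y0 := Z.abs m + 1).
  destruct (exists_prime_quadratic_residue (m - y0*y0) (Z.max K (y0 + 2)))
    as (p & r & Hp & HKp & HD & Hr); [nia|].
  destruct (UZp_of_sqrt m p y0 r Hp ltac:(lia) HD Hr) as (P & _ & Hy & Hz).
  exists p, P. split; [assumption|split; [lia|]].
  set (y := zp_seq (uzp_y P) 1) in *; set (z := zp_seq (uzp_z P) 1) in *.
  assert (Hpy : ~ (p | y)).
  { rewrite Hy, Z.mod_small by lia. intro Hd. apply (divide_small_eq_0 p) in Hd; lia. }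
  assert (Hpz : ~ (p | z)).
  { intro Hd. apply HD, Z.divide_opp_r.
    replace (- (m - y0*y0)) with ((z*z - (m - y0*y0)) - z*z) by ring.
    apply Z.divide_sub_r; [assumption|apply Z.divide_mul_l, Hd]. }
  unfold two_coords_divisible; tauto.
Qed.

(** * Non-density *)

Definition approximates {m p : Z} (k : nat) (P : UZp m p) (a b c : Z) : Prop :=
  a mod p ^ Z.of_nat k = zp_seq (uzp_x P) k /\
  b mod p ^ Z.of_nat k = zp_seq (uzp_y P) k /\
  c mod p ^ Z.of_nat k = zp_seq (uzp_z P) k.

Lemma diag_image_dense_approx2 m S p1 p2 (P1 : UZp m p1) (P2 : UZp m p2) k :
  diag_image_dense m S -> prime p1 -> prime p2 -> p1 <> p2 -> ~ In p1 S -> ~ In p2 S ->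
  exists a b c, markoffZ a b c = m /\ approximates k P1 a b c /\ approximates k P2 a b c.
Proof.
  intros Hd Hp1 Hp2 H12 S1 S2.
  destruct (Hd [existT _ p1 P1; existT _ p2 P2] k) as (a & b & c & Hm & Happ).
  - repeat constructor; cbn; intuition.
  - cbn. intros q [<- | [<- | []]]; auto.
  - exists a, b, c. split; [assumption|].
    split; apply (Happ (existT _ _ _)); cbn; auto.
Qed.

Lemma diag_image_dense_approx3 m S p1 p2 p3 (P1 : UZp m p1) (P2 : UZp m p2)
  (P3 : UZp m p3) k :
  diag_image_dense m S -> prime p1 -> prime p2 -> prime p3 ->
  p1 <> p2 -> p1 <> p3 -> p2 <> p3 -> ~ In p1 S -> ~ In p2 S -> ~ In p3 S ->
  exists a b c, markoffZ a b c = m /\ approximates k P1 a b c /\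
    approximates k P2 a b c /\ approximates k P3 a b c.
Proof.
  intros Hd Hp1 Hp2 Hp3 H12 H13 H23 S1 S2 S3.
  destruct (Hd [existT _ p1 P1; existT _ p2 P2; existT _ p3 P3] k) as (a & b & c & Hm & Happ).
  - repeat constructor; cbn; intuition.
  - cbn. intros q [<- | [<- | [<- | []]]]; auto.
  - exists a, b, c. split; [assumption|].
    split; [|split]; apply (Happ (existT _ _ _)); cbn; auto.
Qed.

Lemma divide_mod_iff p a : p <> 0 -> (p | a mod p) <-> (p | a).
Proof. intros Hp. rewrite <- !Z.mod_divide, Z.mod_mod by assumption. reflexivity. Qed.

Lemma two_coords_divisible_approximates1 m p (P : UZp m p) a b c : 0 < p ->
  approximates 1 P a b c ->
  two_coords_divisible p a b c <->
  two_coords_divisible p (zp_seq (uzp_x P) 1) (zp_seq (uzp_y P) 1) (zp_seq (uzp_z P) 1).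
Proof.
  intros Hp (Ha & Hb & Hc). rewrite Z.pow_1_r in Ha, Hb, Hc.
  unfold two_coords_divisible. rewrite <- Ha, <- Hb, <- Hc, !divide_mod_iff by lia.
  reflexivity.
Qed.

Lemma approximates_Z_point m p (P : UZp m p) u v w k a b c : p <> 0 ->
  (forall n, zp_seq (uzp_x P) n = u mod p ^ Z.of_nat n /\
             zp_seq (uzp_y P) n = v mod p ^ Z.of_nat n /\
             zp_seq (uzp_z P) n = w mod p ^ Z.of_nat n) ->
  approximates k P a b c ->
  (p ^ Z.of_nat k | a - u) /\ (p ^ Z.of_nat k | b - v) /\ (p ^ Z.of_nat k | c - w).
Proof.
  intros Hp HP (Ha & Hb & Hc). destruct (HP k) as (Hu & Hv & Hw).
  assert (HN : p ^ Z.of_nat k <> 0) by (apply Z.pow_nonzero; lia).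
  repeat split; apply mod_eq_divide; congruence.
Qed.

Lemma list_Z_bound (S : list Z) : exists B, forall p, B < p -> ~ In p S.
Proof.
  induction S as [|s S [B HB]]; [exists 0; easy|].
  exists (Z.max s B). intros p Hp [->|Hin]; [lia|]. apply (HB p); [lia|assumption].
Qed.

Lemma not_diag_image_dense_neq4 m S : m <> 4 -> ~ diag_image_dense m S.
Proof.
  intros Hm4 Hd. destruct (list_Z_bound S) as [B HB].
  destruct (exists_UZp_two_coords_divisible m (Z.max B (9 + Z.abs m)))
    as (p1 & P1 & Hp1 & L1 & Div1).
  destruct (exists_UZp_not_two_coords_divisible m (Z.max B p1))
    as (p2 & P2 & Hp2 & L2 & NDiv2).
  destruct (diag_image_dense_approx2 m S p1 p2 P1 P2 1 Hd) as (a & b & c & Hm & A1 & A2);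
    auto; try (apply HB; lia); try lia.
  pose proof (prime_ge_2 p1 Hp1); pose proof (prime_ge_2 p2 Hp2).
  apply NDiv2, (two_coords_divisible_approximates1 m p2 P2 a b c); [lia|assumption|].
  apply (markoffZ_two_coords_divisible_transfer m p1); [assumption|lia|assumption|].
  apply (two_coords_divisible_approximates1 m p1 P1 a b c); [lia|assumption|assumption].
Qed.

(* Modulo p1^2, 2 - a, 2 - b, 2 - c are -p1, -p1, -p1 (p1 + 4); modulo p2^2, 2 + a and
   2 + b are -p2; modulo p3^2, 2 + c is -p3. *)
Lemma not_some_shift_square_near p1 p2 p3 a b c :
  prime p1 -> prime p2 -> prime p3 -> 4 < p1 ->
  (p1*p1 | a - (p1 + 2)) -> (p1*p1 | b - (p1 + 2)) ->
  (p1*p1 | c - ((p1 + 2) * (p1 + 2) - 2)) ->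
  (p2*p2 | a + (p2 + 2)) -> (p2*p2 | b + (p2 + 2)) -> (p3*p3 | c + (p3 + 2)) ->
  ~ some_shift_square a b c.
Proof.
  intros Hp1 Hp2 Hp3 Hp1_4 Ha1 Hb1 Hc1 Ha2 Hb2 Hc3.
  assert (Hunit : forall p, prime p -> ~ (p | -1)).
  { intros p Hp Hd. apply (divide_small_eq_0 p) in Hd; [lia|].
    pose proof (prime_ge_2 p Hp); lia. }
  assert (Hunit1 : ~ (p1 | -(4 + p1))).
  { intros Hd. apply Z.divide_opp_r in Hd. rewrite Z.opp_involutive, Z.add_comm in Hd.
    apply Z.divide_add_cancel_r in Hd; [|apply Z.divide_refl].
    apply (divide_small_eq_0 p1) in Hd; lia. }
  assert (Hneg : forall N u, (N | u) -> (N | - u)) by (intros; apply Z.divide_opp_r; assumption).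
  unfold some_shift_square. intros [H|[H|[H|[H|[H|H]]]]]; revert H.
  - apply (not_square_mod_sq p2 _ (-1)); [| |auto]; [assumption|].
    now replace (2 + a - p2 * -1) with (a + (p2 + 2)) by ring.
  - apply (not_square_mod_sq p1 _ (-1)); [| |auto]; [assumption|].
    replace (2 - a - p1 * -1) with (- (a - (p1 + 2))) by ring. auto.
  - apply (not_square_mod_sq p2 _ (-1)); [| |auto]; [assumption|].
    now replace (2 + b - p2 * -1) with (b + (p2 + 2)) by ring.
  - apply (not_square_mod_sq p1 _ (-1)); [| |auto]; [assumption|].
    replace (2 - b - p1 * -1) with (- (b - (p1 + 2))) by ring. auto.
  - apply (not_square_mod_sq p3 _ (-1)); [| |auto]; [assumption|].
    now replace (2 + c - p3 * -1) with (c + (p3 + 2)) by ring.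
  - apply (not_square_mod_sq p1 _ (-(4 + p1))); [assumption| |assumption].
    replace (2 - c - p1 * -(4 + p1)) with (- (c - ((p1 + 2) * (p1 + 2) - 2))) by ring. auto.
Qed.

Lemma not_diag_image_dense_4 S : ~ diag_image_dense 4 S.
Proof.
  intros Hd. destruct (list_Z_bound S) as [B HB].
  destruct (exists_prime_gt (Z.max B 4)) as (p1 & Hp1 & L1).
  destruct (exists_prime_gt p1) as (p2 & Hp2 & L2).
  destruct (exists_prime_gt p2) as (p3 & Hp3 & L3).
  destruct (UZp_of_solution 4 p1 (p1 + 2) (p1 + 2) ((p1 + 2) * (p1 + 2) - 2)) as [P1 HP1];
    [lia|unfold markoffZ; ring|].
  destruct (UZp_of_solution 4 p2 (-(p2 + 2)) (-(p2 + 2)) ((p2 + 2) * (p2 + 2) - 2)) as [P2 HP2];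
    [lia|unfold markoffZ; ring|].
  destruct (UZp_of_solution 4 p3 (-(p3 + 2)) ((p3 + 2) * (p3 + 2) - 2) (-(p3 + 2))) as [P3 HP3];
    [lia|unfold markoffZ; ring|].
  destruct (diag_image_dense_approx3 4 S p1 p2 p3 P1 P2 P3 2 Hd)
    as (a & b & c & Hm & A1 & A2 & A3); auto; try lia; try (apply HB; lia).
  destruct (approximates_Z_point 4 p1 P1 _ _ _ 2 a b c ltac:(lia) HP1 A1) as (Ha1 & Hb1 & Hc1).
  destruct (approximates_Z_point 4 p2 P2 _ _ _ 2 a b c ltac:(lia) HP2 A2) as (Ha2 & Hb2 & _).
  destruct (approximates_Z_point 4 p3 P3 _ _ _ 2 a b c ltac:(lia) HP3 A3) as (_ & _ & Hc3).
  change (Z.of_nat 2) with 2 in *. rewrite !Z.pow_2_r, !Z.sub_opp_r in *.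
  exact (not_some_shift_square_near p1 p2 p3 a b c Hp1 Hp2 Hp3 ltac:(lia)
           Ha1 Hb1 Hc1 Ha2 Hb2 Hc3 (markoff4_some_shift_square a b c Hm)).
Qed.

Theorem theorem6p2 (m : Z) :
  UR_nonempty m -> UZp_all_nonempty m ->
  forall S : list Z, ~ diag_image_dense m S.
Proof.
  intros _ _ S.
  destruct (Z.eq_dec m 4) as [->|Hm4].
  - apply not_diag_image_dense_4.
  - apply not_diag_image_dense_neq4, Hm4.
Qed.
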